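(* Let $r\ge 3$ and $k\ge 2r+13$ be integers, and $m=\lfloor (k-1)/2\rfloor$. Let $\mathcal G$ be a nonempty $r$-graph containing no Berge-path of length $k$, in which every vertex has degree at least $\binom{m}{r-1}$. Then there is a longest Berge-path $u_1,f_1,u_2,\dots,f_l,u_{l+1}$ in $\mathcal G$, with set of defining hyperedges $\mathcal F=\{f_1,\dots,f_l\}$, such that $|N_{\mathcal G\setminus\mathcal F}(u_1)|\ge m$ and $|N_{\mathcal G\setminus\mathcal F}(u_{l+1})|\ge m$.
   Context: An $r$-graph is a simple $r$-uniform hypergraph; the degree of a vertex is the number of hyperedges containing it. A Berge-path of length $t$ is an alternating sequence $v_1,e_1,v_2,\dots,e_t,v_{t+1}$ of $t+1$ distinct vertices (the defining vertices) and $t$ distinct hyperedges (the defining hyperedges) with $\{v_i,v_{i+1}\}\subseteq e_i$ for all $i$. For a hypergraph $\mathcal K$ and vertex $v$, $N_{\mathcal K}(v)=\{u\neq v: \exists h\in E(\mathcal K),\ \{u,v\}\subseteq h\}$. $\mathcal G\setminus\mathcal F$ denotes the hypergraph on $V(\mathcal G)$ with hyperedge set $E(\mathcal G)\setminus\mathcal F$. *)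

From mathcomp Require Import all_boot.
Set Implicit Arguments. Unset Strict Implicit. Unset Printing Implicit Defensive.

Section Hyper.
Variable V : finType.

Definition is_rgraph (r : nat) (E : {set {set V}}) : Prop :=
  forall e, e \in E -> #|e| = r.

Definition degree (E : {set {set V}}) (v : V) : nat :=
  #|[set e in E | v \in e]|.

(* Berge-path with defining vertices x :: vs (v_1 = x) and defining
   hyperedges es; its length is size es. *)
Definition berge_path (E : {set {set V}}) (x : V) (vs : seq V)
    (es : seq {set V}) : Prop :=
  [/\ size vs = size es, uniq (x :: vs), uniq es, all (mem E) es &
      forall i, i < size es ->
        (nth x (x :: vs) i \in nth set0 es i) &&
        (nth x (x :: vs) i.+1 \in nth set0 es i)].

Definition nbhd (K : {set {set V}}) (v : V) : {set V} :=
  [set u | (u != v) && [exists h in K, (u \in h) && (v \in h)]].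

End Hyper.

From mathcomp Require Import all_boot zify.
From Stdlib Require Import Classical.
Set Implicit Arguments. Unset Strict Implicit. Unset Printing Implicit Defensive.

(* Among the longest Berge-paths choose one minimising the number of path
   hyperedges through its two ends.  If an end x had fewer than m neighbours
   outside the path, at most C(m-1, r-1) of its hyperedges would avoid the
   path, so at least d > (r-2)(m-r+1) path hyperedges f_i contain x.  For each
   such f_i the Posa rotation starting at the i-th defining vertex v_i is
   again a longest path; by minimality every such v_i lies in at least d path
   hyperedges.  Double counting the incidences between the path hyperedges
   and these vertices gives d^2 <= (2m+1) r, a contradiction. *)

Lemma ex_minimizer (T : Type) (P : T -> Prop) (f : T -> nat) :
  (exists t, P t) -> exists2 t, P t & forall t', P t' -> f t <= f t'.
Proof.
move=> [t Pt].
suff: forall n t, P t -> f t <= n -> exists2 t, P t & forall t', P t' -> f t <= f t'.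
  by move/(_ _ t Pt (leqnn _)).
elim=> [|n IHn] {}t {}Pt ft_n.
  by exists t => // t' _; rewrite (leq_trans ft_n).
have [[t' Pt' lt_t't] | none_smaller] := classic (exists2 t', P t' & f t' < f t).
  by apply: (IHn t' Pt'); lia.
exists t => // t' Pt'; rewrite leqNgt; apply/negP => lt_t't.
by apply: none_smaller; exists t'.
Qed.

Lemma last_drop (T : Type) (s : seq T) i y z : i < size s ->
  last y (drop i s) = last z s.
Proof. by elim: s i y z => [|v s IHs] [|i] y z //= lt_i; rewrite (IHs i y v). Qed.

Lemma set_mem_rev (T : finType) (s : seq T) : [set x in rev s] = [set x in s].
Proof. by apply/setP => x; rewrite !inE mem_rev. Qed.

Lemma ltn_mul_bin a b : a * b < 'C(a + b, a).
Proof.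
elim: a b => [|a IHa] b; first by rewrite bin0.
elim: b => [|b IHb]; first by rewrite addn0 binn muln0.
by rewrite addnS binS; have := IHa b.+1; rewrite -addSnnS; lia.
Qed.

Lemma ltn_sq_rotation_bound r m :
  3 <= r -> r + 6 <= m -> (2 * m + 1) * r < ((r - 2) * (m - r + 1)).+1 ^ 2.
Proof.
move=> r_ge; have [a ->] : exists a, r = a + 3 by exists (r - 3); lia.
move=> m_ge; have [b ->] : exists b, m = a + b + 9 by exists (m - a - 9); lia.
have -> : a + 3 - 2 = a + 1 by lia.
have -> : a + b + 9 - (a + 3) + 1 = b + 7 by lia.
rewrite -mulnn; nia.
Qed.

Section Degrees.
Variable V : finType.
Implicit Types (E F : {set {set V}}) (U : {set V}).

Lemma degree_le_bin_nbhd r E F x : is_rgraph r E -> F \subset E ->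
  degree E x <= 'C(#|nbhd (E :\: F) x|, r.-1) + degree F x.
Proof.
move=> rE sFE; set O := [set e in E :\: F | x \in e].
have sub_OF : [set e in E | x \in e] \subset O :|: [set e in F | x \in e].
  apply/subsetP => e; rewrite !inE => /andP[-> ->].
  by rewrite !andbT; case: (e \in F).
rewrite /degree; apply: leq_trans (subset_leq_card sub_OF) _.
apply: leq_trans (leq_card_setU _ _) _; rewrite leq_add2r.
have inj_D1 : {in O &, injective (fun e => e :\ x)}.
  move=> e1 e2; rewrite !inE => /andP[_ xe1] /andP[_ xe2] eq_e.
  by rewrite -(setD1K xe1) -(setD1K xe2) eq_e.
rewrite -(card_in_imset inj_D1) -cards_draws; apply: subset_leq_card.
apply/subsetP => A /imsetP[e]; rewrite !inE => /andP[/andP[eF eE] xe] ->.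
apply/andP; split.
  apply/subsetP => v; rewrite !inE => /andP[vx ve]; rewrite vx /=.
  by apply/existsP; exists e; rewrite !inE eF eE ve xe.
by have := cardsD1 x e; rewrite xe (rE e eE) => ->.
Qed.

Lemma degreeE F v : degree F v = \sum_(e in F) (v \in e).
Proof.
rewrite /degree -sum1_card [LHS]big_mkcond [RHS]big_mkcond /=.
by apply: eq_bigr => e _; rewrite inE; case: (e \in F); case: (v \in e).
Qed.

Lemma sum_degree_le r F U : (forall e, e \in F -> #|e| <= r) ->
  \sum_(v in U) degree F v <= #|F| * r.
Proof.
move=> F_le; under eq_bigr do rewrite degreeE.
rewrite exchange_big /= -sum_nat_const; apply: leq_sum => e eF.
apply: leq_trans (F_le e eF); rewrite -sum1_card.
rewrite big_mkcond [X in _ <= X]big_mkcond /=; apply: leq_sum => v _.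
by case: (v \in U); case: (v \in e).
Qed.

Lemma degree_gt_of_small_nbhd r m E F x : 2 <= r <= m ->
  is_rgraph r E -> F \subset E -> 'C(m, r.-1) <= degree E x ->
  #|nbhd (E :\: F) x| < m -> (r - 2) * (m - r + 1) < degree F x.
Proof.
move=> /andP[r_ge le_rm] rE sFE deg_x small_nbhd.
have split_deg := leq_trans deg_x (degree_le_bin_nbhd x rE sFE).
have le_bin : 'C(#|nbhd (E :\: F) x|, r.-1) <= 'C(m.-1, r.-1).
  by apply: leq_bin2l; lia.
have pascal : 'C(m, r.-1) = 'C(m.-1, r.-1) + 'C(m.-1, r - 2).
  have -> : r.-1 = (r - 2).+1 by lia.
  by rewrite -binS prednK //; lia.
have := ltn_mul_bin (r - 2) (m - r + 1).
have -> : r - 2 + (m - r + 1) = m.-1 by lia.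
lia.
Qed.

End Degrees.

Section BergePaths.
Variables (V : finType) (E : {set {set V}}).

(* A Berge-path given by its whole sequence [s] of defining vertices; the
   default [y] of [nth] is quantified so that it never has to be tracked. *)
Definition berge_path_seq (s : seq V) (es : seq {set V}) : Prop :=
  [/\ size s = (size es).+1, uniq s, uniq es, all (mem E) es &
      forall y j, j < size es ->
        (nth y s j \in nth set0 es j) && (nth y s j.+1 \in nth set0 es j)].

Lemma berge_path_seqE x vs es :
  berge_path E x vs es <-> berge_path_seq (x :: vs) es.
Proof.
split.
  case=> s_es uniq_s uniq_es es_E edges; split=> //=; first by rewrite s_es.
  move=> y j lt_j.
  rewrite (@set_nth_default _ (x :: vs) x y j); last by rewrite /= s_es; lia.
  rewrite (@set_nth_default _ vs x y j); last by rewrite s_es; lia.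
  exact: edges.
case=> /= [[s_es]] uniq_s uniq_es es_E edges; split=> // j; exact: edges.
Qed.

Lemma berge_path_seq_rev s es :
  berge_path_seq s es -> berge_path_seq (rev s) (rev es).
Proof.
case=> s_es uniq_s uniq_es es_E edges; split.
- by rewrite !size_rev.
- by rewrite rev_uniq.
- by rewrite rev_uniq.
- by rewrite all_rev.
move=> y j; rewrite size_rev => lt_j; rewrite !nth_rev ?s_es; try lia.
have := edges y (size es - j.+1) ltac:(lia).
have -> : (size es).+1 - j.+2 = size es - j.+1 by lia.
have -> : (size es).+1 - j.+1 = (size es - j.+1).+1 by lia.
by case/andP=> -> ->.
Qed.

Lemma berge_path_seq_take s es n : berge_path_seq s es -> n <= size es ->
  berge_path_seq (take n.+1 s) (take n es).
Proof.
case=> s_es uniq_s uniq_es es_E edges le_n; split.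
- by rewrite !size_takel ?s_es.
- exact: take_uniq.
- exact: take_uniq.
- by apply/allP=> e /mem_take; apply: (allP es_E).
move=> y j; rewrite size_takel // => lt_j.
by rewrite !nth_take ?ltnS ?(ltnW lt_j) //; apply: edges; lia.
Qed.

(* Posa rotation around the hyperedge [nth set0 es i] through the first vertex. *)
Lemma berge_path_seq_rotate s es i y : berge_path_seq s es -> 0 < i < size es ->
  nth y s 0 \in nth set0 es i ->
  berge_path_seq (rev (take i.+1 s) ++ drop i.+1 s) (rev (take i es) ++ drop i es).
Proof.
case=> s_es uniq_s uniq_es es_E edges /andP[i_gt0 lt_i] s0_fi.
have nth_s' z j : j < size s -> nth z (rev (take i.+1 s) ++ drop i.+1 s) j =
    if j <= i then nth z s (i - j) else nth z s j.
  move=> lt_j; rewrite nth_cat size_rev size_takel; last lia.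
  case: ifP => le_ji; last by rewrite ifF ?nth_drop; [congr nth | ]; lia.
  rewrite ifT; last lia.
  by rewrite nth_rev ?size_takel ?nth_take ?subSS //; lia.
have nth_es' j : j < size es -> nth set0 (rev (take i es) ++ drop i es) j =
    if j < i then nth set0 es (i - j.+1) else nth set0 es j.
  move=> lt_j; rewrite nth_cat size_rev size_takel; last lia.
  case: ifP => lt_ji; last by rewrite nth_drop; congr nth; lia.
  by rewrite nth_rev ?size_takel ?nth_take //; lia.
have perm_rot (T : eqType) (t : seq T) n : perm_eq (rev (take n t) ++ drop n t) t.
  by rewrite -[X in perm_eq _ X](cat_take_drop n) perm_cat2r perm_rev.
have size_es' : size (rev (take i es) ++ drop i es) = size es.
  by rewrite (perm_size (perm_rot _ _ _)).
split.
- by rewrite (perm_size (perm_rot _ _ _)) size_es'.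
- by rewrite (perm_uniq (perm_rot _ _ _)).
- by rewrite (perm_uniq (perm_rot _ _ _)).
- by rewrite (perm_all _ (perm_rot _ _ _)).
move=> z j; rewrite size_es' => lt_j; rewrite nth_es' // !nth_s'; try lia.
case: (ltngtP j i) => [lt_ji | lt_ij | ->]; last 2 first.
- exact: edges.
- rewrite subnn (@set_nth_default _ s y z 0) ?s_es // s0_fi /=.
  by case/andP: (edges z i lt_i).
have := edges z (i - j.+1) ltac:(lia).
have -> : i - j = (i - j.+1).+1 by lia.
by case/andP=> -> ->.
Qed.

Lemma berge_path_rev x vs es : berge_path E x vs es ->
  berge_path E (last x vs) (rev (belast x vs)) (rev es).
Proof.
by move/berge_path_seqE/berge_path_seq_rev; rewrite lastI rev_rcons => /berge_path_seqE.
Qed.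

Lemma berge_path_take x vs es n : berge_path E x vs es -> n <= size es ->
  berge_path E x (take n vs) (take n es).
Proof. by move/berge_path_seqE/berge_path_seq_take => p /p /berge_path_seqE. Qed.

Lemma berge_path_size_lt k :
  (forall x vs es, berge_path E x vs es -> size es <> k) ->
  forall x vs es, berge_path E x vs es -> size es < k.
Proof.
move=> no_k_path x vs es p; rewrite ltnNge; apply/negP => le_k.
by apply: (no_k_path _ _ _ (berge_path_take p le_k)); rewrite size_takel.
Qed.

End BergePaths.

Definition end_degree_sum (V : finType) (x : V) vs (es : seq {set V}) :=
  degree [set e in es] x + degree [set e in es] (last x vs).

Lemma end_degree_sum_rev (V : finType) (x : V) vs es :
  end_degree_sum (last x vs) (rev (belast x vs)) (rev es) = end_degree_sum x vs es.
Proof.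
rewrite /end_degree_sum addnC set_mem_rev.
have -> // : last (last x vs) (rev (belast x vs)) = x.
by case: vs => [|v vs] //=; rewrite rev_cons last_rcons.
Qed.

Section Rotation.
Variables (V : finType) (E : {set {set V}}) (r : nat).
Hypothesis rE : is_rgraph r E.

Lemma head_degree_sq_le x vs es (F := [set e in es]) : berge_path E x vs es ->
  (forall i, 0 < i < size es -> x \in nth set0 es i ->
     degree F x <= degree F (nth x (x :: vs) i)) ->
  degree F x ^ 2 <= size es * r.
Proof.
case/berge_path_seqE=> s_es uniq_s uniq_es es_E _ no_lighter.
set d := degree F x; pose v (i : 'I_(size es)) := nth x (x :: vs) i.
pose I := [set i : 'I_(size es) | (0 < i) && (x \in nth set0 es i)].
have v_inj : injective v.
  move=> i j /eqP; rewrite /v nth_uniq ?s_es ?ltnS ?(ltnW (ltn_ord _)) //.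
  by move/eqP/val_inj.
have x_notin : x \notin v @: I.
  apply/imsetP=> [[i]]; rewrite inE => /andP[i_gt0 _] /eqP.
  rewrite -[X in X == _]/(nth x (x :: vs) 0) /v.
  by rewrite nth_uniq ?s_es ?ltnS ?(ltnW (ltn_ord _)) //; lia.
have card_F : #|F| = size es by rewrite cardsE; apply/card_uniqP.
have F_le e : e \in F -> #|e| <= r by rewrite inE => /(allP es_E) /rE ->.
have d_le : d <= #|I|.+1.
  have sub : [set e in F | x \in e] \subset
             nth set0 es 0 |: [set nth set0 es i | i : 'I__ in I].
    apply/subsetP=> e; rewrite !inE => /andP[e_es x_e].
    have lt_j : index e es < size es by rewrite index_mem.
    case: (posnP (index e es)) => [j0 | j_gt0].
      by rewrite -j0 nth_index ?eqxx.
    apply/orP; right; apply/imsetP; exists (Ordinal lt_j); last by rewrite nth_index.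
    by rewrite inE /= j_gt0 nth_index.
  apply: leq_trans (subset_leq_card sub) _.
  by rewrite cardsU1 -add1n leq_add ?leq_b1 ?leq_imset_card.
have := sum_degree_le (x |: v @: I) F_le.
rewrite big_setU1 //= big_imset /=; last by move=> i j _ _; apply: v_inj.
have sum_ge : #|I| * d <= \sum_(i in I) degree F (v i).
  rewrite -sum_nat_const; apply: leq_sum => i; rewrite inE => /andP[i_gt0 x_fi].
  by apply: no_lighter; rewrite ?i_gt0 ?ltn_ord.
rewrite card_F => sum_le.
have d_sq_le : d * d <= d + #|I| * d by rewrite -mulSn leq_mul2r d_le orbT.
by rewrite -mulnn (leq_trans d_sq_le) // (leq_trans _ sum_le) ?leq_add2l.
Qed.

Section SmallNeighbourhood.
Variables (m : nat) (x : V) (vs : seq V) (es : seq {set V}).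
Let F := [set e in es].
Hypotheses (r_ge : 3 <= r) (m_ge : r + 6 <= m).
Hypotheses (p : berge_path E x vs es) (short : size es <= 2 * m + 1).
Hypotheses (deg_x : 'C(m, r.-1) <= degree E x) (small : #|nbhd (E :\: F) x| < m).

Lemma exists_lighter_rotation_vertex :
  exists2 i, 0 < i < size es &
    (x \in nth set0 es i) && (degree F (nth x (x :: vs) i) < degree F x).
Proof.
apply: NNPP => no_rotation.
have sFE : F \subset E.
  by case: p => _ _ _ es_E _; apply/subsetP=> e; rewrite inE => /(allP es_E).
have deg_gt := degree_gt_of_small_nbhd (ltac:(lia) : 2 <= r <= m) rE sFE deg_x small.
have no_lighter i : 0 < i < size es -> x \in nth set0 es i ->
    degree F x <= degree F (nth x (x :: vs) i).
  move=> lt_i x_fi; rewrite leqNgt; apply/negP => lighter.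
  by apply: no_rotation; exists i; rewrite ?x_fi.
have sq_le := head_degree_sq_le p no_lighter.
have sq_ge : ((r - 2) * (m - r + 1)).+1 ^ 2 <= degree F x ^ 2 by rewrite leq_exp2r.
have := leq_trans sq_ge (leq_trans sq_le (leq_mul short (leqnn r))).
by rewrite leqNgt ltn_sq_rotation_bound.
Qed.

Lemma exists_lighter_path : exists x' vs' es',
  [/\ berge_path E x' vs' es', size es' = size es &
      end_degree_sum x' vs' es' < end_degree_sum x vs es].
Proof.
have [i lt_i /andP[x_fi lighter]] := exists_lighter_rotation_vertex.
have /berge_path_seqE p_seq := p; have [s_es _ _ _ _] := p.
have rot := berge_path_seq_rotate (y := x) p_seq lt_i x_fi.
have lt_i' : i < size (x :: vs) by rewrite /= s_es; lia.
rewrite (take_nth x lt_i') rev_rcons /= in rot.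
exists (nth x (x :: vs) i), (rev (take i (x :: vs)) ++ drop i vs),
  (rev (take i es) ++ drop i es).
split.
- exact/berge_path_seqE.
- by rewrite size_cat size_rev size_takel ?size_drop; lia.
rewrite /end_degree_sum.
have -> : [set e in rev (take i es) ++ drop i es] = F.
  by apply/setP=> e; rewrite !inE mem_cat mem_rev -mem_cat cat_take_drop.
rewrite last_cat (@last_drop _ _ _ _ x) ?s_es; last lia.
by rewrite ltn_add2r.
Qed.

End SmallNeighbourhood.

End Rotation.

Theorem claim1 (V : finType) (r k : nat) (E : {set {set V}}) :
  3 <= r -> 2 * r + 13 <= k ->
  is_rgraph r E ->
  0 < #|V| ->
  (forall x vs es, berge_path E x vs es -> size es <> k) ->
  (forall v : V, 'C((k - 1)./2, r - 1) <= degree E v) ->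
  exists (x : V) (vs : seq V) (es : seq {set V}),
    [/\ berge_path E x vs es,
        (forall x' vs' es', berge_path E x' vs' es' -> size es' <= size es),
        (k - 1)./2 <= #|nbhd (E :\: [set e in es]) x|
      & (k - 1)./2 <= #|nbhd (E :\: [set e in es]) (last x vs)|].
Proof.
move=> r_ge k_ge rE /card_gt0P[x0 _] no_k_path min_deg.
set m := (k - 1)./2 in min_deg *.
have [m_ge le_k] : r + 6 <= m /\ k <= 2 * m + 2.
  by have := odd_double_half (k - 1); rewrite -/m; case: odd => /=; lia.
have short x vs es : berge_path E x vs es -> size es <= 2 * m + 1.
  by move/(berge_path_size_lt no_k_path); lia.
have deg v : 'C(m, r.-1) <= degree E v by rewrite -subn1.
pose path (t : V * seq V * seq {set V}) := berge_path E t.1.1 t.1.2 t.2.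
pose longest t := path t /\ forall t', path t' -> size t'.2 <= size t.2.
have [t0 p0 max_t0] :
    exists2 t, path t & forall t', path t' -> k - size t.2 <= k - size t'.2.
  by apply: ex_minimizer; exists (x0, [::], [::]).
have longest_t0 : longest t0.
  split=> // t' p'; have := max_t0 t' p'; have := berge_path_size_lt no_k_path p0; lia.
have [[[x vs] es] [p longest_p] min_load] :=
  ex_minimizer (fun t => end_degree_sum t.1.1 t.1.2 t.2) (ex_intro longest t0 longest_t0).
have good_head x' vs' es' : berge_path E x' vs' es' -> size es' = size es ->
    end_degree_sum x' vs' es' = end_degree_sum x vs es ->
    m <= #|nbhd (E :\: [set e in es']) x'|.
  move=> p' size' load'; rewrite leqNgt; apply/negP => small.
  have [x'' [vs'' [es'' [p'' size'' lighter]]]] :=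
    exists_lighter_path rE r_ge m_ge p' (short _ _ _ p') (deg _) small.
  suff /min_load /= : longest (x'', vs'', es'') by rewrite leqNgt -load' lighter.
  by split=> // t pt; rewrite /= size'' size'; apply: longest_p.
exists x, vs, es; split=> //.
- by move=> x' vs' es' p'; apply: (longest_p (x', vs', es')).
- exact: (good_head x vs es p erefl erefl).
rewrite -set_mem_rev.
exact: (good_head _ _ _ (berge_path_rev p) (size_rev _) (end_degree_sum_rev _ _ _)).
Qed.
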